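(* Let $F$ be a finite field of characteristic $3$. Let $k\ge 0$ be an integer, $m=3k+1$, and $t$ an integer with $t^3\equiv 1\pmod m$ and $\gcd(m,t-1)=1$. Let $G=T_{3m}=\langle x,y\mid x^m=y^3=1,\ y^{-1}xy=x^t\rangle$ (of order $3m$), $FG$ its group algebra, and $H=\langle x\rangle$. Let $\mathcal{C}_1,\dots,\mathcal{C}_k$ be the conjugacy classes of $G$ contained in $\langle x\rangle\setminus\{1\}$ (there are exactly $k$ of them, each of the form $\{x^j,x^{jt},x^{jt^2}\}$), and let $\hat{\mathcal{C}}_i=\sum_{g\in\mathcal{C}_i}g\in FG$. Then $Z(\Delta(G,H))$ equals the $F$-linear span of $\hat{\mathcal{C}}_1,\dots,\hat{\mathcal{C}}_k$.
   Context: $\Delta(G,H)$ is the ideal of $FG$ generated by $\{h-1\mid h\in H\}$; $Z(R)$ denotes the center of a ring $R$. *)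

From HB Require Import structures.
From mathcomp Require Import all_boot all_order all_algebra all_fingroup all_field.
Set Implicit Arguments. Unset Strict Implicit. Unset Printing Implicit Defensive.
Import GRing.Theory.
Local Open Scope ring_scope.

(* Group algebra F[gT] of a finite group type gT over a ring F:
   elements are finitely supported functions gT -> F, i.e. {ffun gT -> F}
   (with its pointwise F-module structure); the algebra product is the
   convolution [gamul] below (NOT the pointwise product of ffun). *)
Notation galg F gT := {ffun gT -> F} (only parsing).
Section GroupAlgebra.
Variables (F : comNzRingType) (gT : finGroupType).

Local Notation galg := {ffun gT -> F}.

Definition gamul (a b : galg) : galg :=
  [ffun g => \sum_(h : gT) a h * b (h^-1 * g)%g].

Definition gelt (g : gT) : galg := [ffun h => (h == g)%:R].

(* Delta(G,H): the two-sided ideal of FG generated by {h - 1 | h in H} *)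
Definition augIdeal (H : {set gT}) (a : galg) : Prop :=
  exists n (u v : 'I_n -> galg) (hs : 'I_n -> gT),
    (forall i, hs i \in H) /\
    a = \sum_(i < n) gamul (gamul (u i) (gelt (hs i) - gelt 1%g)) (v i).

Definition augCenter (H : {set gT}) (z : galg) : Prop :=
  augIdeal H z /\ forall a, augIdeal H a -> gamul z a = gamul a z.

Definition gascale (c : F) (a : galg) : galg := [ffun g => c * a g].

Definition classSum (C : {set gT}) : galg := [ffun g => (g \in C)%:R].

End GroupAlgebra.

(* Every z in Delta(G,H) sums to 0 over each coset of H, and, H
   being normal, over each set a H b. If z is also central in Delta(G,H), commuting
   it with the elements (h - 1) b and summing over h in H gives
   #|H| z(ab) = #|H| z(ba); as 3 does not divide #|H| = m, z is a class function.
   For g outside H no nontrivial element of H centralises g, so H g is the H-class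
   of g and the coset sum at g is #|H| z(g), whence z(g) = 0. The G-classes in
   H \ 1 have 3 elements, so in characteristic 3 the sum of z over H reduces to
   z(1), which is therefore 0; thus z is a combination of the class sums of these
   classes. Conversely such a combination is central in FG, and it equals
   sum_g z(g) (g - 1) because its coefficients add up to 0. *)

From HB Require Import structures.
From mathcomp Require Import all_boot all_order all_algebra all_fingroup all_field.
From mathcomp Require Import cyclic.
Import GRing.Theory.
Set Implicit Arguments. Unset Strict Implicit. Unset Printing Implicit Defensive.
Local Open Scope ring_scope.

Definition class_fun (gT : finGroupType) (T : Type) (f : gT -> T) :=
  forall g h, f (g ^ h)%g = f g.

Section GroupAlgebra.
Variables (F : comNzRingType) (gT : finGroupType).
Implicit Types (a u v w z : {ffun gT -> F}) (c : F) (g h : gT).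

Lemma gamul_geltl g z : gamul (gelt F g) z = [ffun q => z (g^-1 * q)%g].
Proof.
apply/ffunP => q; rewrite !ffunE (bigD1 g) //= big1 => [|h /negbTE nhg].
  by rewrite ffunE eqxx mul1r addr0.
by rewrite ffunE nhg mul0r.
Qed.

Lemma gamul_geltr g z : gamul z (gelt F g) = [ffun q => z (q * g^-1)%g].
Proof.
apply/ffunP => q; rewrite !ffunE (bigD1 (q * g^-1)%g) //= big1 => [|h nhq].
  by rewrite ffunE invMg invgK mulgKV eqxx mulr1 addr0.
rewrite ffunE; case: eqP => [hgq|]; last by rewrite mulr0.
by case/eqP: nhq; rewrite -hgq invMg invgK mulgA mulgV mul1g.
Qed.

Lemma gamul1l z : gamul (gelt F 1) z = z.
Proof. by rewrite gamul_geltl; apply/ffunP => q; rewrite ffunE invg1 mul1g. Qed.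

Lemma gamul1r z : gamul z (gelt F 1) = z.
Proof. by rewrite gamul_geltr; apply/ffunP => q; rewrite ffunE invg1 mulg1. Qed.

Lemma gelt_mul g h : gamul (gelt F g) (gelt F h) = gelt F (g * h).
Proof.
rewrite gamul_geltl; apply/ffunP => q; rewrite !ffunE.
by rewrite -(inj_eq (mulgI g)) mulKVg.
Qed.

Lemma gamulBl u v w : gamul (u - v) w = gamul u w - gamul v w.
Proof.
by apply/ffunP => q; rewrite !ffunE -sumrB; apply: eq_bigr => h _; rewrite !ffunE mulrBl.
Qed.

Lemma gamulBr u v w : gamul u (v - w) = gamul u v - gamul u w.
Proof.
by apply/ffunP => q; rewrite !ffunE -sumrB; apply: eq_bigr => h _; rewrite !ffunE mulrBr.
Qed.

Lemma gamul_scalel c u v : gamul (gascale c u) v = gascale c (gamul u v).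
Proof.
apply/ffunP => q; rewrite !ffunE mulr_sumr.
by apply: eq_bigr => h _; rewrite ffunE mulrA.
Qed.

Lemma class_fun_central z a : class_fun z -> gamul z a = gamul a z.
Proof.
move=> zJ; apply/ffunP => g; rewrite !ffunE.
rewrite (reindex_inj (h := fun h => g * h^-1)%g); last first.
  by move=> h1 h2 /mulgI /invg_inj.
apply: eq_bigr => h _ /=; rewrite invMg invgK mulgKV mulrC.
by rewrite -(zJ (h^-1 * g) h^-1)%g conjgE invgK !mulgA mulgV mul1g.
Qed.

End GroupAlgebra.

Section Augmentation.
Variables (F : comNzRingType) (gT : finGroupType) (A : {set gT}).
Implicit Types (a u v w : {ffun gT -> F}) (g h : gT).

Lemma sum_rcoset_gamulr a v :
  (forall g, \sum_(h in A) a (h * g)%g = 0) ->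
  forall g, \sum_(h in A) gamul a v (h * g)%g = 0.
Proof.
move=> a0 g; under eq_bigr => h _.
  rewrite ffunE (reindex_inj (mulgI h)) /=.
  under eq_bigr do rewrite invMg -mulgA mulKg.
over.
by rewrite exchange_big big1 // => b _; rewrite -mulr_suml a0 mul0r.
Qed.

Lemma augIdeal_gelt h b : h \in A -> augIdeal A (gelt F (h * b) - gelt F b).
Proof.
exists 1%N, (fun _ => gelt F 1), (fun _ => gelt F b), (fun _ => h).
by split=> //; rewrite big_ord1 gamul1l gamulBl !gelt_mul mul1g.
Qed.

Lemma augIdeal_of_support w :
  (forall g, g \notin A -> w g = 0) -> \sum_(g in A) w g = 0 -> augIdeal A w.
Proof.
move=> w0 sumw0.
exists #|A|, (fun i => gascale (w (enum_val i)) (gelt F 1)), (fun _ => gelt F 1),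
  (fun i => enum_val i); split=> [i|]; first exact: enum_valP.
rewrite -(big_enum_val (fun g => gamul (gamul (gascale (w g) (gelt F 1))
  (gelt F g - gelt F 1)) (gelt F 1))).
apply/ffunP => q; rewrite sum_ffunE.
under eq_bigr do rewrite gamul1r gamul_scalel gamul1l !ffunE mulrBr.
rewrite sumrB -mulr_suml sumw0 mul0r subr0.
case: (boolP (q \in A)) => Aq.
  rewrite (bigD1 q) //= eqxx mulr1 big1 ?addr0 // => g /andP [_ /negbTE].
  by rewrite eq_sym => ->; rewrite mulr0.
rewrite w0 // big1 // => g Ag; case: eqP => [qg|]; last by rewrite mulr0.
by rewrite qg Ag in Aq.
Qed.

End Augmentation.

Section NormalSubgroup.
Variables (gT : finGroupType) (H : {group gT}).
Hypothesis nH : [set: gT] \subset 'N(H)%g.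

Let normH g : g \in 'N(H)%g. Proof. exact: subsetP nH g (in_setT g). Qed.

Lemma class_rcoset_TI g : 'C_H[g]%g = 1%g -> (g ^: H = H :* g)%g.
Proof.
move=> tiHg; apply/eqP; rewrite eqEcard card_rcoset -index_cent1 tiHg indexg1 leqnn.
rewrite andbT; apply/subsetP => _ /imsetP [v Hv ->].
rewrite mem_rcoset conjgE -!mulgA groupMl ?groupV //.
by rewrite -{1}[g]invgK -conjgE memJ_norm.
Qed.

Lemma sum_rcoset_normal (M : nmodType) (f : gT -> M) :
  (forall g, \sum_(h in H) f (h * g)%g = 0) ->
  forall a b, \sum_(h in H) f (a * h * b)%g = 0.
Proof.
move=> f0 a b; rewrite -[RHS](f0 (a * b)%g) (reindex_inj (conjg_inj a)) /=.
apply: eq_big => [h | h _]; first by rewrite memJ_norm.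
by rewrite conjgE !mulgA mulgV mul1g.
Qed.

Lemma sum_rcoset_mul_aug (F : comNzRingType) (u : {ffun gT -> F}) h0 : h0 \in H ->
  forall g, \sum_(h in H) gamul u (gelt F h0 - gelt F 1) (h * g)%g = 0.
Proof.
move=> Hh0 g; rewrite gamulBr gamul_geltr gamul1r.
under eq_bigr do rewrite !ffunE.
rewrite sumrB (reindex_inj (mulIg (h0 ^ g^-1))%g) /=; apply/eqP; rewrite subr_eq0.
apply/eqP/eq_big => [h | h _]; first by rewrite groupMr // memJ_norm.
by rewrite conjgE invgK !mulgA mulgVK mulgK.
Qed.

Lemma augIdeal_sum0 (F : comNzRingType) (a : {ffun gT -> F}) :
  augIdeal H a -> forall b c, \sum_(h in H) a (b * h * c)%g = 0.
Proof.
case=> n [u [v [hs [Hhs ->]]]]; apply: sum_rcoset_normal => g.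
under eq_bigr do rewrite sum_ffunE.
rewrite exchange_big big1 // => i _.
exact/sum_rcoset_gamulr/sum_rcoset_mul_aug.
Qed.

Lemma augCenter_class_fun (F : idomainType) (z : {ffun gT -> F}) :
  (#|H|%:R : F) != 0 -> augCenter H z -> class_fun z.
Proof.
move=> nzH [zI zC].
have zmid := augIdeal_sum0 zI.
have zr a : \sum_(h in H) z (a * h)%g = 0.
  by rewrite -[RHS](zmid a 1%g); apply: eq_bigr => h _; rewrite mulg1.
(* Commuting z with (h^-1 - 1) b^-1 and summing over h in H leaves only the
   h-free terms, multiplied by #|H|. *)
have zcomm (q b : gT) : z (q * b)%g = z (b * q)%g.
  have zC_gelt h : h \in H ->
      z (q * b * h)%g - z (q * b)%g = z (b * h * q)%g - z (b * q)%g.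
    move=> Hh; have zCh := zC _ (augIdeal_gelt F b^-1 (groupVr Hh)).
    have := congr1 (fun w : {ffun gT -> F} => w q) zCh.
    by rewrite gamulBr gamulBl !gamul_geltr !gamul_geltl !ffunE !invMg !invgK !mulgA.
  have : \sum_(h in H) (z (q * b * h)%g - z (q * b)%g) =
         \sum_(h in H) (z (b * h * q)%g - z (b * q)%g) := eq_bigr _ zC_gelt.
  rewrite !sumrB zr (zmid b q) !sumr_const !sub0r => /oppr_inj.
  by rewrite -[z (q * b)%g *+ _]mulr_natr -[z (b * q)%g *+ _]mulr_natr; apply: mulIf.
by move=> g a; rewrite conjgE zcomm mulgK.
Qed.

Lemma class_fun_augIdeal_TI_eq0 (F : idomainType) (z : {ffun gT -> F}) g :
  (#|H|%:R : F) != 0 -> class_fun z -> augIdeal H z -> 'C_H[g]%g = 1%g -> z g = 0.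
Proof.
move=> nzH zJ zI tiHg; have := augIdeal_sum0 zI 1%g g.
rewrite (eq_bigr (fun _ => z g)) => [|h Hh]; last first.
  have : (h * g \in g ^: H)%g by rewrite class_rcoset_TI // mem_rcoset mulgK.
  by rewrite mul1g => /imsetP [v _ ->]; apply: zJ.
rewrite sumr_const -mulr_natr => /eqP; rewrite mulf_eq0 (negbTE nzH) orbF.
exact: eqP.
Qed.

End NormalSubgroup.

Section ClassSums.
Variable gT : finGroupType.
Local Notation G := [set: gT]%G.

Lemma sum_class_fun_pchar (R : nzRingType) p (A : {set gT}) (f : gT -> R) :
  p \in [pchar R] -> (forall g a, g \in A -> (g ^ a)%g \in A) ->
  (forall g, g \in A -> p %| #|(g ^: G)%g|)%N -> class_fun f ->
  \sum_(g in A) f g = 0.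
Proof.
move=> pR AJ pA fJ; rewrite (partition_big_imset (fun g => g ^: G)%g) /=.
apply: big1 => _ /imsetP [g Ag ->].
rewrite (eq_bigl [in (g ^: G)%g]) => [|h]; last first.
  apply/andP/idP => [[_ /eqP <-] | /imsetP [a _ ->]]; first exact: class_refl.
  by rewrite AJ // classGidl ?inE.
rewrite (eq_bigr (fun _ => f g)) => [|_ /imsetP [a _ ->]]; last exact: fJ.
rewrite sumr_const; have /dvdnP [n ->] := pA g Ag.
by rewrite -mulr_natr natrM (pcharf0 pR) !mulr0.
Qed.

Lemma classSum_spanP (F : comNzRingType) (A : {set gT}) (z : {ffun gT -> F}) :
  (exists c : {set gT} -> F,
     z = \sum_(C in classes G | C \subset A) gascale (c C) (classSum F C)) <->
  class_fun z /\ (forall g, g \notin A -> z g = 0).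
Proof.
have memC g C : C \in classes G -> (g \in C) = (C == g ^: G)%g.
  case/imsetP => b _ ->; apply/idP/eqP => [/class_eqP -> // | ->].
  exact: class_refl.
split => [[c ->] | [zJ z0]].
  have zE g : (\sum_(C in classes G | C \subset A) gascale (c C) (classSum F C)) g =
      \sum_(C in classes G | C \subset A) c C * (g \in C)%:R.
    by rewrite sum_ffunE; apply: eq_bigr => C _; rewrite !ffunE.
  split => [g a | g Ag]; rewrite !zE.
    apply: eq_bigr => _ /andP [/imsetP [b _ ->] _].
    by rewrite memJ_norm // (subsetP (class_norm b G)) ?inE.
  apply: big1 => C /andP [_ sCA].
  by rewrite (contraNF (subsetP sCA g)) // mulr0.
exists (fun C => z (repr C)); apply/ffunP => g; rewrite sum_ffunE.
under eq_bigr => C /andP [CG _] do rewrite !ffunE memC //.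
have [sGA | nsGA] := boolP ((g ^: G)%g \subset A).
  rewrite (bigD1 (g ^: G)%g) /= ?mem_classes ?inE ?sGA // eqxx mulr1.
  rewrite big1 ?addr0 => [|C /andP [_ /negbTE ->]]; last by rewrite mulr0.
  by case: (repr_class G g) => a _ ->; rewrite zJ.
rewrite big1 => [|C /andP [_ sCA]]; last first.
  by case: eqP => [eC | _]; [rewrite -eC sCA in nsGA | rewrite mulr0].
by case/subsetPn: nsGA => _ /imsetP [a _ ->] /z0; rewrite zJ.
Qed.

End ClassSums.

Section MetacyclicGroup.
Local Open Scope group_scope.
Variables (gT : finGroupType) (k t : nat) (x y : gT).
Hypotheses (cop : coprime (3 * k + 1) (t - 1)) (gen : <<[set x; y]>> = [set: gT]).
Hypotheses (xm : x ^+ (3 * k + 1) = 1) (y3 : y ^+ 3 = 1) (xy : x ^ y = x ^+ t).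
Hypothesis cardG : #|gT| = (3 * (3 * k + 1))%N.

Lemma norm_cycle_x : [set: gT] \subset 'N(<[x]>).
Proof.
rewrite -gen gen_subG subUset !sub1set (subsetP (normG _) _ (cycle_id x)) /=.
by rewrite inE -cycleJ xy cycleX.
Qed.

Lemma mul_cycles_xy : <[x]> * <[y]> = [set: gT].
Proof.
rewrite -norm_joinEr ?cycle_subG ?(subsetP norm_cycle_x) ?inE //.
apply/eqP; rewrite eqEsubset subsetT -{1}gen; apply: genS.
by rewrite subUset !sub1set !inE !cycle_id ?orbT.
Qed.

Lemma card_cycle_x : #|<[x]>| = (3 * k + 1)%N.
Proof.
have dvd_xm : (#|<[x]>| %| 3 * k + 1)%N by rewrite -orderE order_dvdn xm.
have le_y3 : (#|<[y]>| <= 3)%N by rewrite -orderE dvdn_leq // order_dvdn y3.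
have : (#|gT| <= #|<[x]>| * 3)%N.
  rewrite -cardsT -mul_cycles_xy; apply: leq_trans (leq_mul (leqnn _) le_y3).
  by rewrite mul_cardG leq_pmulr ?cardG_gt0.
rewrite cardG mulnC leq_pmul2r // => le_m_x.
by apply/eqP; rewrite eqn_leq le_m_x dvdn_leq // addn1.
Qed.

Lemma indexg_cycle_x : #|[set: gT] : <[x]>| = 3%N.
Proof.
have := Lagrange (subsetT <[x]>); rewrite cardsT cardG card_cycle_x mulnC.
by move/eqP; rewrite eqn_pmul2r ?addn1 // => /eqP.
Qed.

Lemma cycle_x_TI_cent1y : 'C_<[x]>[y] = 1.
Proof.
apply/trivgP/subsetP => _ /setIP [/cycleP [j ->] /cent1P /commgP /conjg_fixP].
rewrite inE conjXg xy -expgM -order_dvdn.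
have co_x : coprime #[x] (t - 1) by apply: coprime_dvdl cop; rewrite order_dvdn xm.
have [t0 | t_gt0] := posnP t; first by move: co_x; rewrite t0 /coprime gcdn0 => /eqP ->.
rewrite -(subnK t_gt0) mulnDl mul1n expgD -{2}[x ^+ j]mul1g => /mulIg.
by rewrite -(Gauss_dvdr _ co_x) order_dvdn => ->.
Qed.

Lemma cent1_cycle_x w : w \in <[x]>^# -> 'C[w] = <[x]>.
Proof.
case/setD1P => ntw xw.
have sHC : <[x]> \subset 'C[w] by rewrite sub_cent1 (subsetP (cycle_abelian x)).
have notCy : y \notin 'C[w].
  apply: contra ntw; rewrite cent1C => wy.
  have : w \in 'C_<[x]>[y] by apply/setIP.
  by rewrite cycle_x_TI_cent1y inE.
have idxC : #|[set: gT] : 'C[w]| = 3%N.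
  have : (#|[set: gT] : 'C[w]| %| 3)%N.
    by rewrite -indexg_cycle_x -(Lagrange_index (subsetT 'C[w]) sHC) dvdn_mulr.
  apply/prime_nt_dvdP => //; apply: contra notCy => /eqP/index1g-> //.
  exact: subsetT.
have := Lagrange (subsetT 'C[w]); rewrite idxC -(Lagrange (subsetT <[x]>)).
rewrite indexg_cycle_x => /eqP; rewrite eqn_pmul2r // => /eqP cardC.
by apply/eqP; rewrite eq_sym eqEcard sHC cardC leqnn.
Qed.

Lemma card_class_cycle_x w : w \in <[x]>^# -> #|w ^: [set: gT]| = 3%N.
Proof. by move=> xw; rewrite -index_cent1 setTI cent1_cycle_x // indexg_cycle_x. Qed.

Lemma cycle_x_TI_cent1 g : g \notin <[x]> -> 'C_<[x]>[g] = 1.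
Proof.
move=> xg; apply/trivgP/subsetP => w /setIP [xw gw]; rewrite inE.
apply: contraR xg => ntw; rewrite -(cent1_cycle_x (w := w)) 1?cent1C //.
exact/setD1P.
Qed.

Lemma memJ_cycle_xD1 g a : g \in <[x]>^# -> g ^ a \in <[x]>^#.
Proof.
by rewrite !in_setD1 conjg_eq1 memJ_norm // (subsetP norm_cycle_x) ?inE.
Qed.

Lemma sum_cycle_x_class_fun (R : nzRingType) (f : gT -> R) :
  3 \in [pchar R] -> class_fun f -> (\sum_(h in <[x]>) f h)%R = f 1.
Proof.
move=> pR fJ; rewrite (big_setD1 1) //= (sum_class_fun_pchar pR) ?addr0 //.
  exact: memJ_cycle_xD1.
by move=> w /card_class_cycle_x ->.
Qed.

End MetacyclicGroup.

Theorem proposition3p12 (F : finFieldType) (gT : finGroupType)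
    (k t : nat) (x y : gT) :
  3 \in [pchar F] ->
  (t ^ 3 == 1 %[mod (3 * k + 1)])%N ->
  coprime (3 * k + 1) (t - 1) ->
  (* G = gT is T_{3m}, m = 3k+1: generated by x, y with x^m = y^3 = 1,
     y^-1 x y = x^t, and of order 3m *)
  <<[set x; y]>>%g = [set: gT] ->
  (x ^+ (3 * k + 1))%g = 1%g ->
  (y ^+ 3)%g = 1%g ->
  (x ^ y)%g = (x ^+ t)%g ->
  #|gT| = (3 * (3 * k + 1))%N ->
  forall z : galg F gT,
    augCenter <[x]>%g z <->
    exists c : {set gT} -> F,
      z = \sum_(C in classes [set: gT] | C \subset (<[x]>^#)%g)
            gascale (c C) (classSum F C).
Proof.
move=> p3 _ cop gen xm y3 xy cardG z.
have nH := norm_cycle_x gen xy.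
have sum_x := sum_cycle_x_class_fun cop gen xm y3 xy cardG p3.
have nzH : (#|<[x]>%g|%:R : F) != 0.
  by rewrite (card_cycle_x gen xm y3 xy cardG) -(dvdn_pcharf p3) dvdn_addr ?dvdn_mulr.
split => [zZ | /classSum_spanP [zJ z0]].
  have zJ := augCenter_class_fun nH nzH zZ.
  apply/classSum_spanP; split=> // g.
  rewrite in_setD1 negb_and negbK => /orP [/eqP -> | xg].
    rewrite -(sum_x _ zJ) -[RHS](augIdeal_sum0 nH zZ.1 1 1).
    by apply: eq_bigr => h _; rewrite mul1g mulg1.
  apply: (class_fun_augIdeal_TI_eq0 nH nzH zJ zZ.1).
  exact: cycle_x_TI_cent1 cop gen xm y3 xy cardG _ xg.
split=> [|a _]; last exact: class_fun_central.
apply: augIdeal_of_support => [g xg | ].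
  by apply: z0; rewrite in_setD1 (negbTE xg) andbF.
by rewrite sum_x // z0 // !inE eqxx.
Qed.
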